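(* Let $R$ be a commutative ring with identity. Then $R$ is almost complemented if and only if its classical ring of quotients $q(R)$ is almost complemented.
   Context: $\mathfrak{N}(R)$ is the nilradical, $\mathrm{reg}(R)$ the set of regular elements (non-zero-divisors), and $q(R)$ the localization of $R$ at $\mathrm{reg}(R)$. A ring $A$ is complemented if for every $a\in A$ there is $b\in A$ with $ab=0$ and $a+b\in\mathrm{reg}(A)$. $R$ is almost complemented if $R/\mathfrak{N}(R)$ is complemented. *)

From HB Require Import structures.
From mathcomp Require Import all_boot all_algebra.
Set Implicit Arguments. Unset Strict Implicit. Unset Printing Implicit Defensive.
Import GRing.Theory.
Local Open Scope ring_scope.

Definition regular (R : comPzRingType) (x : R) : Prop :=
  forall y : R, x * y = 0 -> y = 0.

Definition in_nilradical (R : comPzRingType) (x : R) : Prop :=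
  exists n : nat, x ^+ n = 0.

Definition complemented (A : comPzRingType) : Prop :=
  forall a : A, exists b : A, a * b = 0 /\ regular (a + b).

(* R is almost complemented: R/N(R) is complemented.  Written out on
   representatives: the class of x in R/N(R) is zero iff x \in N(R), so
   "(a+N)(b+N) = 0" is "a*b \in N(R)" and "a+b+N regular in R/N(R)" is
   "forall y, (a+b)*y \in N(R) -> y \in N(R)". *)
Definition almost_complemented (R : comPzRingType) : Prop :=
  forall a : R, exists b : R,
    in_nilradical (a * b) /\
    (forall y : R, in_nilradical ((a + b) * y) -> in_nilradical y).

(* f : R -> Q exhibits Q as the classical ring of quotients q(R) = reg(R)^{-1} R,
   via the standard universal characterization of the localization at
   S = reg(R):  f(s) is a unit for s in S; every element is f(a)/f(s);
   ker f = {a | s a = 0 for some s in S}. *)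
Definition classical_quotient_ring (R Q : comPzRingType) (f : {rmorphism R -> Q}) : Prop :=
  [/\ forall s : R, regular s -> exists t : Q, f s * t = 1,
      forall q : Q, exists a s : R, regular s /\ q * f s = f a
    & forall a : R, f a = 0 -> exists s : R, regular s /\ s * a = 0].

(* Localizing at the regular elements neither creates nor destroys nilpotents:
   f x is nilpotent iff x is, and a fraction f a / f s is nilpotent iff a is.
   A complement of a / s modulo the nilradical is therefore obtained from a
   complement b of a as f b / f s, and conversely a complement p = f c / f s
   of f a yields the complement c of a.  For the converse one uses that if
   a b and (a + b) y are nilpotent, then so are a y and b y, so that the unit
   factor f s can be removed from b = p f s. *)

From HB Require Import structures.
From mathcomp Require Import all_boot all_algebra.
From mathcomp Require Import zify ring.
Set Implicit Arguments. Unset Strict Implicit.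
Import GRing.Theory.
Local Open Scope ring_scope.

Section Nilradical.
Variable R : comPzRingType.
Implicit Types a b t u x y : R.

Lemma expr_eq0W x m n : x ^+ m = 0 -> (m <= n)%N -> x ^+ n = 0.
Proof. by move=> xm0 le_mn; rewrite -(subnK le_mn) exprD xm0 mulr0. Qed.

Lemma nilradicalMr x y : in_nilradical x -> in_nilradical (x * y).
Proof. by case=> n xn0; exists n; rewrite exprMn xn0 mul0r. Qed.

Lemma nilradicalMl x y : in_nilradical y -> in_nilradical (x * y).
Proof. by rewrite mulrC; apply: nilradicalMr. Qed.

Lemma nilradicalD x y :
  in_nilradical x -> in_nilradical y -> in_nilradical (x + y).
Proof.
case=> m xm0 [k yk0]; exists (m + k)%N; rewrite exprDn big1 // => i _.
have [le_mi | lt_im] := leqP m (m + k - i).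
  by rewrite (expr_eq0W xm0 le_mi) mul0r mul0rn.
have le_ki : (k <= i)%N by move: lt_im; lia.
by rewrite (expr_eq0W yk0 le_ki) mulr0 mul0rn.
Qed.

Lemma nilradicalN x : in_nilradical x -> in_nilradical (- x).
Proof. by rewrite -mulN1r; apply: nilradicalMl. Qed.

Lemma nilradicalB x y :
  in_nilradical x -> in_nilradical y -> in_nilradical (x - y).
Proof. by move=> Nx Ny; apply: nilradicalD => //; apply: nilradicalN. Qed.

Lemma nilradical_sqr x : in_nilradical (x * x) -> in_nilradical x.
Proof. by case=> n xxn0; exists (2 * n)%N; rewrite exprM expr2. Qed.

Lemma nilradical_unitMl t u x :
  t * u = 1 -> in_nilradical (u * x) -> in_nilradical x.
Proof. by move=> tu1 Nux; rewrite -[x]mul1r -tu1 -mulrA; apply: nilradicalMl. Qed.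

Lemma nilradical_orthoMl a b y :
  in_nilradical (a * b) -> in_nilradical ((a + b) * y) -> in_nilradical (a * y).
Proof.
move=> Nab Nsumy; apply: nilradical_sqr.
have -> : a * y * (a * y) = (a * ((a + b) * y) - a * b * y) * y by ring.
by apply/nilradicalMr/nilradicalB; [apply: nilradicalMl | apply: nilradicalMr].
Qed.

Lemma regularM x y : regular x -> regular y -> regular (x * y).
Proof. by move=> rx ry z; rewrite -mulrA => /rx /ry. Qed.

End Nilradical.

Lemma rmorph_nilradical (R S : comPzRingType) (f : {rmorphism R -> S}) x :
  in_nilradical x -> in_nilradical (f x).
Proof. by case=> n xn0; exists n; rewrite -rmorphXn xn0 rmorph0. Qed.

Section ClassicalQuotientRing.
Variables (R Q : comPzRingType) (f : {rmorphism R -> Q}).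
Hypothesis qf : classical_quotient_ring f.

Lemma nilradical_quotientE x : in_nilradical (f x) <-> in_nilradical x.
Proof.
split; last exact: rmorph_nilradical.
case: qf => _ _ kerf [n]; rewrite -rmorphXn => /kerf [s [rs sxn0]].
by exists n; apply: rs.
Qed.

Lemma nilradical_fractionE q a s :
  regular s -> q * f s = f a -> in_nilradical q <-> in_nilradical a.
Proof.
case: qf => unitf _ _ rs qsa; have [t st1] := unitf s rs.
rewrite -nilradical_quotientE -qsa; split; first exact: nilradicalMr.
by rewrite mulrC; apply: (nilradical_unitMl (t := t)); rewrite mulrC.
Qed.

Lemma almost_complemented_quotient :
  almost_complemented R -> almost_complemented Q.
Proof.
case: qf => unitf fracf _ acR q.
have [a [s [rs qsa]]] := fracf q; have [t st1] := unitf s rs.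
have [b [Nab regab]] := acR a.
have q'sb : f b * t * f s = f b by rewrite -mulrA [t * _]mulrC st1 mulr1.
exists (f b * t); split.
  have qq'E : q * (f b * t) * f (s * s) = f (a * b).
    by rewrite !rmorphM -qsa -[in RHS]q'sb; ring.
  exact: (nilradical_fractionE (regularM rs rs) qq'E).2 Nab.
move=> y Nsumy; have [c [r [rr yrc]]] := fracf y.
apply/(nilradical_fractionE rr yrc)/regab.
have sumyE : (q + f b * t) * y * f (s * r) = f ((a + b) * c).
  by rewrite !rmorphM rmorphD -qsa -[in RHS]q'sb -yrc; ring.
exact: (nilradical_fractionE (regularM rs rr) sumyE).1 Nsumy.
Qed.

Lemma almost_complemented_of_quotient :
  almost_complemented Q -> almost_complemented R.
Proof.
case: qf => unitf fracf _ acQ a.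
have [p [Nap regap]] := acQ (f a).
have [c [s [rs psc]]] := fracf p; have [t st1] := unitf s rs.
exists c; split.
  by apply/nilradical_quotientE; rewrite rmorphM -psc mulrA; apply: nilradicalMr.
move=> y /(rmorph_nilradical f); rewrite rmorphM rmorphD -psc => Nsumy.
have Nay : in_nilradical (f a * f y).
  by apply: nilradical_orthoMl Nsumy; rewrite mulrA; apply: nilradicalMr.
have Npsy : in_nilradical (f s * (p * f y)).
  have -> : f s * (p * f y) = (f a + p * f s) * f y - f a * f y by ring.
  exact: nilradicalB.
apply/nilradical_quotientE/regap; rewrite mulrDl; apply: nilradicalD => //.
by apply: (nilradical_unitMl (t := t) _ Npsy); rewrite mulrC.
Qed.

End ClassicalQuotientRing.

Theorem mainTheorem6 (R Q : comPzRingType) (f : {rmorphism R -> Q}) :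
  classical_quotient_ring f ->
  (almost_complemented R <-> almost_complemented Q).
Proof.
move=> qf; split.
  exact: (almost_complemented_quotient qf).
exact: (almost_complemented_of_quotient qf).
Qed.
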